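(* Let $Q$ be a set and let $\{*_\alpha\}_{\alpha\in\Lambda}$ be a family of quandle operations on $Q$ that are pairwise distributive with respect to each other, i.e. $(a*_\alpha b)*_\beta c=(a*_\beta c)*_\alpha(b*_\beta c)$ for all $\alpha,\beta\in\Lambda$ and $a,b,c\in Q$. Let $F$ be the free group on the symbols $*_\alpha$, and for $w\in F$ let $\star_w$ be the operation defined by $a\star_w b=(\cdots((a\,s_1\,b)\,s_2\,b)\cdots)\,s_k\,b$ for $w=s_1\cdots s_k$ (the letter $*_\alpha^{-1}$ acting as the right inverse operation of $*_\alpha$). Then the group $Q_F=\{(Q,\star_w)\mid w\in F\}$, with quandle multiplication $(Q,\star_w)(Q,\star_v)=(Q,\star_{wv})$, is commutative; that is, $\star_{wv}=\star_{vw}$ for all $w,v\in F$.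
   Context: A quandle operation on $Q$ is a binary operation $*$ with $x*x=x$, unique right division, and $(x*y)*z=(x*z)*(y*z)$. The right inverse $\bar*$ of $*$ is defined by $a=c*b\iff c=a\,\bar*\,b$. Quandle multiplication of two structures on the same set: $(Q,\circ)(Q,* )=(Q,\circ* )$ with $a\,(\circ* )\,b=(a\circ b)*b$; the unit of $Q_F$ is the trivial quandle ($a\star b=a$) and the inverse of $(Q,\star_w)$ is $(Q,\star_{w^{-1}})$. *)

From Stdlib Require Import List ClassicalEpsilon.

Definition is_quandle {Q : Type} (op : Q -> Q -> Q) : Prop :=
  (forall x, op x x = x) /\
  (forall a b, exists! c, op c b = a) /\
  (forall x y z, op (op x y) z = op (op x z) (op y z)).

Definition rdiv {Q : Type} (op : Q -> Q -> Q) (a b : Q) : Q :=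
  epsilon (inhabits a) (fun c => op c b = a).

(* Letters of the free group on the symbols *_alpha: (alpha, true) is *_alpha,
   (alpha, false) is *_alpha^{-1}, acting as the right inverse of *_alpha. *)
Definition letter_op {Q L : Type} (ops : L -> Q -> Q -> Q) (s : L * bool)
  : Q -> Q -> Q :=
  if snd s then ops (fst s) else rdiv (ops (fst s)).

Definition star_word {Q L : Type} (ops : L -> Q -> Q -> Q) (w : list (L * bool))
  (a b : Q) : Q :=
  fold_left (fun x s => letter_op ops s x b) w a.

(* Fix the right operand b.  Distributivity together with idempotency b *_beta b = b
   makes the right translations x |-> x *_alpha b pairwise commute; they are bijections,
   so their inverses x |-> x bar*_alpha b commute with them and with each other.  Now
   x |-> a star_w b is the composite of the translations spelled by w, and a composite
   of pairwise commuting maps does not depend on the order of its factors. *)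

From Stdlib Require Import List Permutation ClassicalEpsilon FunctionalExtensionality.

Lemma fold_left_Permutation {A X : Type} (g : A -> X -> X) :
  (forall s t x, g s (g t x) = g t (g s x)) ->
  forall w v, Permutation w v ->
  forall x, fold_left (fun y s => g s y) w x = fold_left (fun y s => g s y) v x.
Proof.
  intros g_comm w v Hwv.
  induction Hwv as [| s w v _ IH | s t w | u w v _ IHuw _ IHwv]; intro x; simpl.
  - reflexivity.
  - apply IH.
  - now rewrite g_comm.
  - now rewrite IHuw, IHwv.
Qed.

Lemma commute_inverse {X : Type} (f g g' : X -> X) :
  (forall x, g' (g x) = x) -> (forall x, g (g' x) = x) ->
  (forall x, f (g x) = g (f x)) ->
  forall x, f (g' x) = g' (f x).
Proof.
  intros gK g'K fg x.
  rewrite <- (gK (f (g' x))), <- fg, g'K.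
  reflexivity.
Qed.

Section RightDivision.

Variables (Q : Type) (op : Q -> Q -> Q).
Hypothesis op_div_unique : forall a b, exists! c, op c b = a.

Lemma op_rdivK a b : op (rdiv op a b) b = a.
Proof.
  destruct (op_div_unique a b) as [c [Hc _]].
  exact (epsilon_spec (inhabits a) (fun c => op c b = a) (ex_intro _ c Hc)).
Qed.

Lemma rdiv_opK c b : rdiv op (op c b) b = c.
Proof.
  destruct (op_div_unique (op c b) b) as [c0 [_ Huniq]].
  transitivity c0.
  - symmetry; apply Huniq, op_rdivK.
  - apply Huniq; reflexivity.
Qed.

End RightDivision.

Lemma right_translations_commute {Q : Type} (op1 op2 : Q -> Q -> Q) :
  (forall x, op2 x x = x) ->
  (forall a b c, op2 (op1 a b) c = op1 (op2 a c) (op2 b c)) ->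
  forall b x, op2 (op1 x b) b = op1 (op2 x b) b.
Proof.
  intros op2_idem op2_dist b x.
  now rewrite op2_dist, op2_idem.
Qed.

Section DistributiveFamily.

Variables (Q L : Type) (ops : L -> Q -> Q -> Q).
Hypothesis ops_quandle : forall alpha, is_quandle (ops alpha).
Hypothesis ops_dist : forall alpha beta (a b c : Q),
  ops beta (ops alpha a b) c = ops alpha (ops beta a c) (ops beta b c).

Let ops_div_unique alpha : forall a b, exists! c, ops alpha c b = a :=
  proj1 (proj2 (ops_quandle alpha)).

Let ops_commute alpha beta b x :
  ops beta (ops alpha x b) b = ops alpha (ops beta x b) b.
Proof.
  apply right_translations_commute; [apply ops_quandle | apply ops_dist].
Qed.

Let ops_rdiv_commute alpha beta b x :
  ops beta (rdiv (ops alpha) x b) b = rdiv (ops alpha) (ops beta x b) b.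
Proof.
  apply (commute_inverse (fun y => ops beta y b) (fun y => ops alpha y b)
                          (fun y => rdiv (ops alpha) y b)).
  - intro y; apply rdiv_opK, ops_div_unique.
  - intro y; apply op_rdivK, ops_div_unique.
  - intro y; apply ops_commute.
Qed.

Let rdiv_rdiv_commute alpha beta b x :
  rdiv (ops beta) (rdiv (ops alpha) x b) b = rdiv (ops alpha) (rdiv (ops beta) x b) b.
Proof.
  apply (commute_inverse (fun y => rdiv (ops beta) y b) (fun y => ops alpha y b)
                          (fun y => rdiv (ops alpha) y b)).
  - intro y; apply rdiv_opK, ops_div_unique.
  - intro y; apply op_rdivK, ops_div_unique.
  - intro y; symmetry; apply ops_rdiv_commute.
Qed.

Lemma letter_op_commute s t b x :
  letter_op ops s (letter_op ops t x b) b = letter_op ops t (letter_op ops s x b) b.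
Proof.
  destruct s as [alpha []], t as [beta []]; unfold letter_op; simpl.
  - apply ops_commute.
  - apply ops_rdiv_commute.
  - symmetry; apply ops_rdiv_commute.
  - apply rdiv_rdiv_commute.
Qed.

End DistributiveFamily.

Theorem corollary4p15 (Q L : Type) (ops : L -> Q -> Q -> Q)
  (Hq : forall alpha, is_quandle (ops alpha))
  (Hdist : forall alpha beta (a b c : Q),
      ops beta (ops alpha a b) c = ops alpha (ops beta a c) (ops beta b c)) :
  forall w v : list (L * bool),
    star_word ops (w ++ v) = star_word ops (v ++ w).
Proof.
  intros w v.
  apply functional_extensionality; intro a.
  apply functional_extensionality; intro b.
  apply (fold_left_Permutation (fun s x => letter_op ops s x b)).
  - intros s t x; apply letter_op_commute; assumption.
  - apply Permutation_app_comm.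
Qed.
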